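(* Let $T_\sigma$ be a binary separating tree of a separable permutation $\sigma$ of size $k$, and let $\tau=\tau_1\cdots\tau_n$ be a permutation. Define, for each node $V$ of $T_\sigma$ and integers $i,j,a,b$, a pattern $M(V,i,j,a,b)$ as follows. If $i>j$ or $a>b$, $M(V,i,j,a,b)=\epsilon$ (empty pattern). Otherwise ($1\le i\le j\le n$, $1\le a\le b\le n$): if $V$ is a leaf, $M(V,i,j,a,b)=1$ if there is $h\in\{i,\dots,j\}$ with $a\le\tau_h\le b$ and $\epsilon$ otherwise; if $V$ is an internal node with left child $V_L$ and right child $V_R$, processed after its children, then $M(V,i,j,a,b)=\mathrm{Longest}\{M(V_L,i,h-1,a,c-1)\oplus M(V_R,h,j,c,b): i\le h\le j+1,\ a\le c\le b+1\}$ if $V$ is labeled $+$, and $M(V,i,j,a,b)=\mathrm{Longest}\{M(V_L,i,h-1,c,b)\ominus M(V_R,h,j,a,c-1): i\le h\le j+1,\ a\le c\le b+1\}$ if $V$ is labeled $-$. Then $M(\text{root of }T_\sigma,1,n,1,n)$ is a longest common pattern of $\sigma$ and $\tau$.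
   Context: A permutation $\pi=\pi_1\cdots\pi_k$ is a pattern of $\sigma$ if some subsequence of $\sigma$ is order-isomorphic to $\pi$; a longest common pattern of $\sigma$ and $\tau$ is a permutation of maximum length that is a pattern of both. A permutation is separable if it avoids $3\,1\,4\,2$ and $2\,4\,1\,3$. A binary separating tree of $\sigma=\sigma_1\cdots\sigma_k$ is an ordered binary tree with $k$ leaves (read left to right as $\sigma_1,\dots,\sigma_k$), internal nodes labeled $+$ or $-$, such that the entries below each node have values forming an interval and, at a $+$ (resp. $-$) node, values below the left child are all smaller (resp. larger) than those below the right child. For patterns $\pi$ of length $k$ and $\pi'$ of length $k'$: $\pi\oplus\pi'=\pi_1\cdots\pi_k(\pi'_1+k)\cdots(\pi'_{k'}+k)$ and $\pi\ominus\pi'=(\pi_1+k')\cdots(\pi_k+k')\pi'_1\cdots\pi'_{k'}$. $\mathrm{Longest}(S)$ denotes an element of maximal length of the finite set $S$ of patterns (e.g. the lexicographically smallest among those of maximal length). *)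

From mathcomp Require Import all_boot.
Set Implicit Arguments. Unset Strict Implicit. Unset Printing Implicit Defensive.

Definition is_perm (s : seq nat) : bool := perm_eq s (iota 1 (size s)).

Definition order_iso (s t : seq nat) : Prop :=
  size s = size t /\
  forall i j, i < size s -> j < size s ->
    (nth 0 s i < nth 0 s j) = (nth 0 t i < nth 0 t j).

Definition is_pattern (pi sigma : seq nat) : Prop :=
  exists s, subseq s sigma /\ order_iso s pi.

Definition separable (sigma : seq nat) : Prop :=
  is_perm sigma /\ ~ is_pattern [:: 3; 1; 4; 2] sigma /\ ~ is_pattern [:: 2; 4; 1; 3] sigma.

Definition longest_common_pattern (pi sigma tau : seq nat) : Prop :=
  [/\ is_perm pi, is_pattern pi sigma, is_pattern pi tau &
      forall pi', is_perm pi' -> is_pattern pi' sigma -> is_pattern pi' tau ->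
        size pi' <= size pi].

Definition psum (p q : seq nat) : seq nat := p ++ map (fun x => x + size p) q.
Definition msum (p q : seq nat) : seq nat := map (fun x => x + size q) p ++ q.

Inductive sign := Plus | Minus.
Inductive tree := Leaf | Node of sign & tree & tree.

Fixpoint nleaves (T : tree) : nat :=
  match T with Leaf => 1 | Node _ L R => nleaves L + nleaves R end.

(* values of sigma at (0-based) positions s, ..., s+n-1 *)
Definition block (sigma : seq nat) (s n : nat) : seq nat := take n (drop s sigma).

Definition is_interval (l : seq nat) : bool :=
  perm_eq l (iota (foldr minn (head 0 l) l) (size l)).

(* T, whose leaves are positions s, s+1, ... (0-based) of sigma, satisfies
   the separating-tree conditions at every node *)
Fixpoint sep_at (sigma : seq nat) (T : tree) (s : nat) : bool :=
  match T with
  | Leaf => true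
  | Node sg L R =>
      let lv := block sigma s (nleaves L) in
      let rv := block sigma (s + nleaves L) (nleaves R) in
      [&& is_interval (lv ++ rv),
          (match sg with
           | Plus => allrel (fun x y => x < y) lv rv
           | Minus => allrel (fun x y => x > y) lv rv end),
          sep_at sigma L s & sep_at sigma R (s + nleaves L)]
  end.

Definition separating_tree (sigma : seq nat) (T : tree) : bool :=
  (nleaves T == size sigma) && sep_at sigma T 0.

Definition longest_selector (Longest : seq (seq nat) -> seq nat) : Prop :=
  forall S : seq (seq nat), S != [::] ->
    Longest S \in S /\ forall x, x \in S -> size x <= size (Longest S).

(* the dynamic programme M(V,i,j,a,b); tau is 1-indexed: tau_h = nth 0 tau h.-1 *)
Fixpoint M (tau : seq nat) (Longest : seq (seq nat) -> seq nat)
    (V : tree) (i j a b : nat) : seq nat :=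
  if (j < i) || (b < a) then [::] else
  match V with
  | Leaf =>
      if has (fun h => a <= nth 0 tau h.-1 <= b) (index_iota i j.+1)
      then [:: 1] else [::]
  | Node Plus L R =>
      Longest [seq psum (M tau Longest L i h.-1 a c.-1) (M tau Longest R h j c b)
              | h <- index_iota i j.+2, c <- index_iota a b.+2]
  | Node Minus L R =>
      Longest [seq msum (M tau Longest L i h.-1 c b) (M tau Longest R h j a c.-1)
              | h <- index_iota i j.+2, c <- index_iota a b.+2]
  end.

From mathcomp Require Import all_boot zify.
Set Implicit Arguments. Unset Strict Implicit. Unset Printing Implicit Defensive.

(** By induction on the separating tree, M(V,i,j,a,b) is a longest common
    pattern of the block of sigma below V and of the subword of tau_i ... tau_j
    made of the values in [a, b].  At a [+] node every entry of the left block
    is below every entry of the right one, so a common pattern splits as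
    [pi_L (+) pi_R] with [pi_L] a pattern of the left block and [pi_R] of the
    right one; its occurrence in tau splits at a position h and a value
    threshold c, so [pi_L] and [pi_R] are common patterns for the windows
    (i, h-1, a, c-1) and (h, j, c, b) of the children.  Conversely every
    candidate sum is a common pattern, hence the longest candidate is optimal.
    A [-] node is symmetric, with skew sums. *)

Definition sep_rel (sg : sign) (x y : nat) : bool :=
  if sg is Plus then x < y else x > y.

Definition sign_sum (sg : sign) (p q : seq nat) : seq nat :=
  if sg is Plus then psum p q else msum p q.

Lemma order_iso_sym s t : order_iso s t -> order_iso t s.
Proof. by case=> E H; split=> // i j; rewrite -E => Hi Hj; rewrite H. Qed.

Lemma order_iso_take k s t : order_iso s t -> order_iso (take k s) (take k t).
Proof.
case=> E H; split; first by rewrite !size_take E.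
move=> i j; rewrite size_take_min => Hi Hj.
by rewrite !nth_take ?H //; lia.
Qed.

Lemma order_iso_drop k s t : order_iso s t -> order_iso (drop k s) (drop k t).
Proof.
case=> E H; split; first by rewrite !size_drop E.
move=> i j; rewrite size_drop => Hi Hj.
by rewrite !nth_drop H //; lia.
Qed.

Lemma order_iso_shift d s t : order_iso s t -> order_iso s (map (fun x => x + d) t).
Proof.
case=> E H; split; first by rewrite size_map.
by move=> i j Hi Hj; rewrite !(nth_map 0) -?E // H // ltn_add2r.
Qed.

Lemma sep_rel_cmp sg x y x' y' : sep_rel sg x y -> sep_rel sg x' y' ->
  (x < y) = (x' < y') /\ (y < x) = (y' < x').
Proof. by case: sg => /= r r'; split; apply/idP/idP; lia. Qed.

Lemma order_iso_cat sg s1 s2 p1 p2 : order_iso s1 p1 -> order_iso s2 p2 ->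
  allrel (sep_rel sg) s1 s2 -> allrel (sep_rel sg) p1 p2 ->
  order_iso (s1 ++ s2) (p1 ++ p2).
Proof.
case=> E1 H1 [E2 H2] /allrelP S /allrelP P; split; first by rewrite !size_cat E1 E2.
have cross i j : i < size s1 -> j < size s2 ->
    (nth 0 s1 i < nth 0 s2 j) = (nth 0 p1 i < nth 0 p2 j) /\
    (nth 0 s2 j < nth 0 s1 i) = (nth 0 p2 j < nth 0 p1 i).
  move=> Hi Hj; apply: (@sep_rel_cmp sg); [apply: S | apply: P];
    by apply: mem_nth; rewrite -?E1 -?E2.
move=> i j; rewrite size_cat !nth_cat -E1 => Hi Hj.
case: (ltnP i (size s1)) => Hi1; case: (ltnP j (size s1)) => Hj1.
- exact: H1.
- by case: (cross i (j - size s1)) => //; lia.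
- by case: (cross j (i - size s1)) => //; lia.
- by apply: H2; lia.
Qed.

Lemma order_iso_allrel sg s1 s2 p1 p2 :
  order_iso (s1 ++ s2) (p1 ++ p2) -> size s1 = size p1 ->
  allrel (sep_rel sg) s1 s2 -> allrel (sep_rel sg) p1 p2.
Proof.
case=> E H E1 /allrelP S; apply/allrelP => x y /(nthP 0) [i Hi <-] /(nthP 0) [j Hj <-].
have Hs1 : i < size s1 by rewrite E1.
have Hs2 : j < size s2 by move/eqP: E; rewrite !size_cat E1 eqn_add2l => /eqP ->.
have := H (size s1 + j) i; have := H i (size s1 + j).
have F : (size s1 + j < size s1) = false by lia.
rewrite !nth_cat size_cat -E1 Hs1 F addKn.
move: (S _ _ (mem_nth 0 Hs1) (mem_nth 0 Hs2)); clear S.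
by case: sg => /= r lt_ij lt_ji; [rewrite -lt_ij | rewrite -lt_ji]; lia.
Qed.

Lemma size_pattern p X : is_pattern p X -> size p <= size X.
Proof. by case=> s [/size_subseq le_sX [<- _]]. Qed.

Lemma pattern_subseq p X Y : is_pattern p X -> subseq X Y -> is_pattern p Y.
Proof. by case=> s [sX os] XY; exists s; split=> //; apply: subseq_trans XY. Qed.

Lemma pattern_nil X : is_pattern [::] X.
Proof. by exists [::]; split; [apply: sub0seq | split]. Qed.

Lemma pattern1 x X : x \in X -> is_pattern [:: 1] X.
Proof.
move=> xX; exists [:: x]; split; first by rewrite sub1seq.
by split=> // i j; rewrite /= !ltnS !leqn0 => /eqP -> /eqP ->; rewrite ltnn.
Qed.

Lemma perm_vals p x : is_perm p -> x \in p -> 0 < x <= size p.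
Proof. by rewrite /is_perm => /perm_mem ->; rewrite mem_iota; lia. Qed.

Lemma size_sign_sum sg p q : size (sign_sum sg p q) = size p + size q.
Proof. by case: sg; rewrite /= /psum /msum size_cat size_map. Qed.

Lemma perm_shift d p : is_perm p -> perm_eq (map (fun x => x + d) p) (iota d.+1 (size p)).
Proof.
move=> pP; rewrite -addn1 iotaDl (eq_map (_ : _ =1 addn d)) ?perm_map // => x.
exact: addnC.
Qed.

Lemma perm_sign_sum sg p q : is_perm p -> is_perm q -> is_perm (sign_sum sg p q).
Proof.
rewrite /is_perm size_sign_sum => pP qP; case: sg; rewrite /= /psum /msum.
- by rewrite iotaD add1n perm_cat ?perm_shift.
- by rewrite addnC iotaD add1n perm_catC perm_cat ?perm_shift.
Qed.

Lemma pattern_sign_sum sg p q X Y : is_perm p -> is_perm q ->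
  is_pattern p X -> is_pattern q Y -> allrel (sep_rel sg) X Y ->
  is_pattern (sign_sum sg p q) (X ++ Y).
Proof.
move=> pP qP [s1 [sX o1]] [s2 [sY o2]] /allrelP XY.
have s12 : allrel (sep_rel sg) s1 s2.
  by apply/allrelP => x y /(mem_subseq sX) x1 /(mem_subseq sY) y2; apply: XY.
exists (s1 ++ s2); split; first exact: cat_subseq.
case: sg {XY} s12 => s12; apply: order_iso_cat s12 _ => //; try exact: order_iso_shift.
- by apply/allrelP => x _ /(perm_vals pP) ? /mapP [z /(perm_vals qP) ? ->] /=; lia.
- by apply/allrelP => _ y /mapP [z /(perm_vals pP) ? ->] /(perm_vals qP) ? /=; lia.
Qed.

Lemma subseq_cat_inv (T : eqType) (s x y : seq T) : subseq s (x ++ y) ->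
  exists s1 s2, [/\ s = s1 ++ s2, subseq s1 x & subseq s2 y].
Proof.
case/subseqP=> m size_m ->; rewrite -(cat_take_drop (size x) m) mask_cat; last first.
  by rewrite size_takel // size_m size_cat leq_addr.
by exists (mask (take (size x) m) x), (mask (drop (size x) m) y); rewrite !mask_subseq.
Qed.

Lemma cat_subseq_inv (T : eqType) (t1 t2 y : seq T) : subseq (t1 ++ t2) y ->
  exists2 k, k <= size y & subseq t1 (take k y) /\ subseq t2 (drop k y).
Proof.
elim: y t1 => [|x y IH] [|z t1] /=.
- by exists 0.
- by case: t1.
- by exists 0; rewrite ?sub0seq ?drop0.
- case: eqP => [->|_] sub.
  + by have [k le_k [s1 s2]] := IH _ sub; exists k.+1 => //=; rewrite eqxx.
  + have [k le_k [s1 s2]] := IH (z :: t1) sub; exists k.+1 => //=; split => //.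
    exact: subseq_trans s1 (subseq_cons _ _).
Qed.

Lemma pattern_cat_split sg p X Y : is_pattern p (X ++ Y) -> allrel (sep_rel sg) X Y ->
  exists k, [/\ is_pattern (take k p) X, is_pattern (drop k p) Y &
                allrel (sep_rel sg) (take k p) (drop k p)].
Proof.
case=> s [/subseq_cat_inv [s1 [s2 [-> sX sY]]] os] /allrelP XY.
have size_s1 : size s1 <= size p by rewrite -os.1 size_cat leq_addr.
exists (size s1); split.
- by exists s1; split => //; have := order_iso_take (size s1) os; rewrite take_size_cat.
- by exists s2; split => //; have := order_iso_drop (size s1) os; rewrite drop_size_cat.
- apply: (order_iso_allrel (s1 := s1) (s2 := s2)); first by rewrite cat_take_drop.
    by rewrite size_takel.
  by apply/allrelP => x y /(mem_subseq sX) x1 /(mem_subseq sY) y2; apply: XY.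
Qed.

Lemma pattern_cut sg p Z k : is_pattern p Z ->
  allrel (sep_rel sg) (take k p) (drop k p) ->
  exists t1 t2, [/\ subseq (t1 ++ t2) Z, allrel (sep_rel sg) t1 t2,
                    order_iso t1 (take k p) & order_iso t2 (drop k p)].
Proof.
case=> t [tZ ot] sep_p; exists (take k t), (drop k t).
split; [by rewrite cat_take_drop | | exact: order_iso_take | exact: order_iso_drop].
apply: order_iso_allrel sep_p; first by rewrite !cat_take_drop; exact: order_iso_sym.
by rewrite !size_take ot.1.
Qed.

Lemma value_cut a b (s t : seq nat) : 0 < a -> a <= b.+1 ->
  all (fun x => a <= x <= b) s -> all (fun y => a <= y <= b) t ->
  allrel (fun x y => x < y) s t ->
  exists2 c, a <= c <= b.+1 &
    all (fun x => a <= x <= c.-1) s && all (fun y => c <= y <= b) t.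
Proof.
move=> a_gt0 ab /allP sab /allP tab /allrelP st.
set m := \max_(x <- s) x.
have le_m x : x \in s -> x <= m by move=> xs; exact: leq_bigmax_seq.
have m_lt y : y \in t -> m < y.
  move=> yt; suff : m <= y.-1 by have := tab y yt; lia.
  by apply/bigmax_leqP_seq => x xs _; have := st x y xs yt; lia.
have m_le : m <= b by apply/bigmax_leqP_seq => x /sab; lia.
exists (maxn a m.+1); first lia.
apply/andP; split; apply/allP => x xP.
- by have := le_m x xP; have := sab x xP; lia.
- by have := m_lt x xP; have := tab x xP; lia.
Qed.

(* tau_i ... tau_j, with tau 1-indexed as in [M] *)
Definition segment (tau : seq nat) (i j : nat) : seq nat :=
  [seq nth 0 tau h.-1 | h <- index_iota i j.+1].

Definition window (tau : seq nat) (i j a b : nat) : seq nat :=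
  [seq x <- segment tau i j | a <= x <= b].

Section Windows.
Variable tau : seq nat.

Lemma size_segment i j : size (segment tau i j) = j.+1 - i.
Proof. by rewrite size_map size_iota. Qed.

Lemma segment_cat i j h : 0 < i -> i <= h <= j.+1 ->
  segment tau i h.-1 ++ segment tau h j = segment tau i j.
Proof.
move=> i_gt0 ihj; rewrite /segment -map_cat /index_iota prednK; last by lia.
by rewrite (_ : j.+1 - i = (h - i) + (j.+1 - h)) ?iotaD ?subnKC //; lia.
Qed.

Lemma subseq_segment_cat i j (t1 t2 : seq nat) : 0 < i -> i <= j.+1 ->
  subseq (t1 ++ t2) (segment tau i j) ->
  exists2 h, i <= h <= j.+1 & subseq t1 (segment tau i h.-1) /\ subseq t2 (segment tau h j).
Proof.
move=> i_gt0 ij /cat_subseq_inv [k]; rewrite size_segment => le_k.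
have ihj : i <= i + k <= j.+1 by lia.
rewrite -(segment_cat i_gt0 ihj).
have size_k : size (segment tau i (i + k).-1) = k by rewrite size_segment; lia.
by rewrite -{1 3}size_k take_size_cat ?drop_size_cat //; exists (i + k).
Qed.

Lemma subseq_window t i j a b :
  subseq t (window tau i j a b) = all (fun x => a <= x <= b) t && subseq t (segment tau i j).
Proof. exact: subseq_filter. Qed.

Lemma mem_window i j a b x : x \in window tau i j a b -> a <= x <= b.
Proof. by rewrite mem_filter => /andP []. Qed.

Lemma window_nil i j a b : (j < i) || (b < a) -> window tau i j a b = [::].
Proof.
case/orP=> [ji|ba].
  by rewrite /window /segment /index_iota (_ : j.+1 - i = 0) //; lia.
by apply/eqP; rewrite -[_ == _]negbK -has_filter; apply/hasPn => x _; lia.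
Qed.

Lemma window_cat_subseq i j h a b aL bL aR bR : 0 < i -> i <= h <= j.+1 ->
  a <= aL -> bL <= b -> a <= aR -> bR <= b ->
  subseq (window tau i h.-1 aL bL ++ window tau h j aR bR) (window tau i j a b).
Proof.
move=> i_gt0 ihj *; rewrite subseq_window all_cat -(segment_cat i_gt0 ihj).
rewrite cat_subseq ?filter_subseq // andbT.
by apply/andP; split; apply/allP => x /mem_window; lia.
Qed.

Lemma segment_full : segment tau 1 (size tau) = tau.
Proof.
rewrite /segment /index_iota subn1 /= -(addn0 1) iotaDl -map_comp.
by rewrite -[in RHS](mkseq_nth 0 tau).
Qed.

Lemma window_full : is_perm tau -> window tau 1 (size tau) 1 (size tau) = tau.
Proof.
by move=> tauP; rewrite /window segment_full; apply/all_filterP/allP => x /(perm_vals tauP).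
Qed.

Lemma window_cut i j a b (t1 t2 : seq nat) : 0 < i -> i <= j.+1 ->
  subseq (t1 ++ t2) (window tau i j a b) ->
  exists2 h, i <= h <= j.+1 &
    [/\ subseq t1 (segment tau i h.-1), subseq t2 (segment tau h j),
        all (fun x => a <= x <= b) t1 & all (fun x => a <= x <= b) t2].
Proof.
move=> i_gt0 ij; rewrite subseq_window all_cat => /andP [/andP [v1 v2]].
by case/(subseq_segment_cat i_gt0 ij) => h ihj [s1 s2]; exists h.
Qed.

Lemma window_split_lt i j a b (t1 t2 : seq nat) : 0 < i -> 0 < a ->
  i <= j.+1 -> a <= b.+1 ->
  subseq (t1 ++ t2) (window tau i j a b) -> allrel (fun x y => x < y) t1 t2 ->
  exists h c, [/\ h \in index_iota i j.+2, c \in index_iota a b.+2,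
                  subseq t1 (window tau i h.-1 a c.-1) & subseq t2 (window tau h j c b)].
Proof.
move=> i_gt0 a_gt0 ij ab /(window_cut i_gt0 ij) [h ihj [s1 s2 v1 v2]] lt12.
have [c acb /andP [w1 w2]] := value_cut a_gt0 ab v1 v2 lt12.
by exists h, c; rewrite !mem_index_iota !subseq_window s1 s2 w1 w2; split => //; lia.
Qed.

Lemma window_split_gt i j a b (t1 t2 : seq nat) : 0 < i -> 0 < a ->
  i <= j.+1 -> a <= b.+1 ->
  subseq (t1 ++ t2) (window tau i j a b) -> allrel (fun x y => x > y) t1 t2 ->
  exists h c, [/\ h \in index_iota i j.+2, c \in index_iota a b.+2,
                  subseq t1 (window tau i h.-1 c b) & subseq t2 (window tau h j a c.-1)].
Proof.
move=> i_gt0 a_gt0 ij ab /(window_cut i_gt0 ij) [h ihj [s1 s2 v1 v2]] gt12.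
have [c acb /andP [w2 w1]] := value_cut a_gt0 ab v2 v1 (etrans (allrelC _ _ _) gt12).
by exists h, c; rewrite !mem_index_iota !subseq_window s1 s2 w1 w2; split => //; lia.
Qed.

End Windows.

(* Unlike [longest_common_pattern], [p] ranges over all sequences: the two
   halves of a split pattern are not permutations. *)
Definition longest_common (m X Y : seq nat) : Prop :=
  [/\ is_perm m, is_pattern m X, is_pattern m Y &
      forall p, is_pattern p X -> is_pattern p Y -> size p <= size m].

Lemma longest_common_nil X : longest_common [::] X [::].
Proof. by split; [|exact: pattern_nil..|move=> p _ /size_pattern]. Qed.

Lemma longest_common_leaf x Y :
  longest_common (if Y != [::] then [:: 1] else [::]) [:: x] Y.
Proof.
case: Y => [|y Y]; first exact: longest_common_nil.
by split; [|exact: pattern1 (mem_head _ _)..|move=> p /size_pattern].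
Qed.

Section NodeStep.
Variables (Longest : seq (seq nat) -> seq nat) (sg : sign) (X Y W : seq nat).
Variables (hs cs : seq nat) (WL WR mL mR : nat -> nat -> seq nat).
Hypothesis LongestP : longest_selector Longest.
Hypothesis sepXY : allrel (sep_rel sg) X Y.
Hypothesis sub_WLR : forall h c, h \in hs -> c \in cs -> subseq (WL h c ++ WR h c) W.
Hypothesis sep_WLR :
  forall h c, h \in hs -> c \in cs -> allrel (sep_rel sg) (WL h c) (WR h c).
Hypothesis cut_W : forall t1 t2, subseq (t1 ++ t2) W -> allrel (sep_rel sg) t1 t2 ->
  exists h c, [/\ h \in hs, c \in cs, subseq t1 (WL h c) & subseq t2 (WR h c)].
Hypothesis lcL : forall h c, h \in hs -> c \in cs -> longest_common (mL h c) X (WL h c).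
Hypothesis lcR : forall h c, h \in hs -> c \in cs -> longest_common (mR h c) Y (WR h c).

Lemma longest_common_node :
  longest_common (Longest [seq sign_sum sg (mL h c) (mR h c) | h <- hs, c <- cs])
                 (X ++ Y) W.
Proof.
set S := [seq _ | h <- hs, c <- cs].
have memS h c : h \in hs -> c \in cs -> sign_sum sg (mL h c) (mR h c) \in S.
  by move=> hh cc; apply: (allpairs_f (fun h c => sign_sum sg (mL h c) (mR h c))).
have [inS maxS] : Longest S \in S /\ forall x, x \in S -> size x <= size (Longest S).
  apply: LongestP.
  (* [S] is nonempty because the empty word has a cut *)
  have [h [c [hh cc _ _]]] := cut_W (t1 := [::]) (t2 := [::]) (sub0seq W) (allrel0l _ _).
  by apply/eqP => S0; have := memS h c hh cc; rewrite S0.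
have maxLS p : is_pattern p (X ++ Y) -> is_pattern p W -> size p <= size (Longest S).
  move=> pXY pW; have [k [pX pY sep_k]] := pattern_cat_split pXY sepXY.
  have [t1 [t2 [t12W sep12 o1 o2]]] := pattern_cut pW sep_k.
  have [h [c [hh cc t1W t2W]]] := cut_W t12W sep12.
  have [_ _ _ maxL] := lcL hh cc; have [_ _ _ maxR] := lcR hh cc.
  rewrite -(cat_take_drop k p) size_cat; apply: leq_trans (maxS _ (memS h c hh cc)).
  by rewrite size_sign_sum leq_add ?maxL ?maxR //; [exists t1 | exists t2].
have /allpairsP [[h c] /= [hh cc LS]] := inS; rewrite LS in maxLS *.
have [PL XL WLL _] := lcL hh cc; have [PR YR WRR _] := lcR hh cc.
split; [exact: perm_sign_sum | exact: pattern_sign_sum | | exact: maxLS].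
exact: pattern_subseq (pattern_sign_sum PL PR WLL WRR (sep_WLR hh cc)) (sub_WLR hh cc).
Qed.

End NodeStep.

Lemma block_cat sigma s n1 n2 :
  block sigma s (n1 + n2) = block sigma s n1 ++ block sigma (s + n1) n2.
Proof. by rewrite /block takeD drop_drop addnC. Qed.

Lemma block1 (sigma : seq nat) s : s < size sigma -> block sigma s 1 = [:: nth 0 sigma s].
Proof. by move=> lt_s; rewrite /block (drop_nth 0 lt_s) take_cons take0. Qed.

Lemma M_nil tau Longest V i j a b :
  (j < i) || (b < a) -> M tau Longest V i j a b = [::].
Proof. by case: V => [|[] L R] /= ->. Qed.

Lemma M_leaf tau Longest i j a b :
  M tau Longest Leaf i j a b = if window tau i j a b != [::] then [:: 1] else [::].
Proof.
rewrite /=; case: ifP => [/(window_nil tau) -> // | _].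
by rewrite /window -has_filter has_map.
Qed.

Lemma longest_common_M tau Longest sigma V s i j a b : longest_selector Longest ->
  sep_at sigma V s -> s + nleaves V <= size sigma -> 0 < i -> 0 < a ->
  longest_common (M tau Longest V i j a b) (block sigma s (nleaves V)) (window tau i j a b).
Proof.
move=> LongestP; elim: V s i j a b => [|sg L IHL R IHR] s i j a b sepV le_s i_gt0 a_gt0.
  by rewrite M_leaf block1; [exact: longest_common_leaf | rewrite -addn1].
have [empty | ] := boolP ((j < i) || (b < a)).
  by rewrite M_nil // window_nil //; exact: longest_common_nil.
move=> nonempty; have /andP [ij ab] : (i <= j) && (a <= b) by lia.
move: sepV le_s => /= /and4P [_ sepLR sepL sepR] le_s.
rewrite block_cat (negbTE nonempty).
case: sg sepLR => sepLR.
- apply: (@longest_common_node _ Plus _ _ _ _ _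
    (fun h c => window tau i h.-1 a c.-1) (fun h c => window tau h j c b)) => //.
  + by move=> h c; rewrite !mem_index_iota => hh cc; apply: window_cat_subseq; lia.
  + by move=> h c _ _; apply/allrelP => x y /mem_window ? /mem_window ? /=; lia.
  + by move=> t1 t2; apply: window_split_lt => //; lia.
  + by move=> h c; rewrite !mem_index_iota => hh cc; apply: IHL => //; lia.
  + by move=> h c; rewrite !mem_index_iota => hh cc; apply: IHR => //; lia.
- apply: (@longest_common_node _ Minus _ _ _ _ _
    (fun h c => window tau i h.-1 c b) (fun h c => window tau h j a c.-1)) => //.
  + by move=> h c; rewrite !mem_index_iota => hh cc; apply: window_cat_subseq; lia.
  + by move=> h c _ _; apply/allrelP => x y /mem_window ? /mem_window ? /=; lia.
  + by move=> t1 t2; apply: window_split_gt => //; lia.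
  + by move=> h c; rewrite !mem_index_iota => hh cc; apply: IHL => //; lia.
  + by move=> h c; rewrite !mem_index_iota => hh cc; apply: IHR => //; lia.
Qed.

Theorem proposition3 (sigma tau : seq nat) (T : tree)
    (Longest : seq (seq nat) -> seq nat) :
  longest_selector Longest ->
  separable sigma ->
  separating_tree sigma T ->
  is_perm tau ->
  longest_common_pattern (M tau Longest T 1 (size tau) 1 (size tau)) sigma tau.
Proof.
move=> LongestP _ /andP [/eqP size_T sepT] tauP.
have [mP m_sigma m_tau max_m] :=
  longest_common_M tau (i := 1) (a := 1) (size tau) (size tau) LongestP sepT
    (eq_leq size_T) isT isT.
rewrite window_full // size_T /block drop0 take_size in m_sigma m_tau max_m.
by split=> // p _; exact: max_m.
Qed.
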